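(* Let $\mathcal{D}=\{t_1,\dots,t_n\}$ be a relational database whose tables are indexed according to a topological order of its (acyclic) foreign-key graph, and let $\preceq^*$ (ascend-or-equal) and $\preceq$ (affect-or-equal) be the relations on $\mathcal{D}$ defined below. Then $\preceq$ is a partial order on $\mathcal{D}$ (reflexive, antisymmetric and transitive).
   Context: A relational database is a finite set of tables $t_1,\dots,t_n$. A foreign key constraint $\phi_{ij}$ means that table $t_i$ is a parent of table $t_j$ (i.e. $t_j$ references $t_i$); $\Phi_j$ denotes the set of all foreign key constraints on $t_j$. The directed graph whose vertices are the tables and with an edge from $t_i$ to $t_j$ whenever some $\phi_{ij}\in\Phi_j$ is assumed acyclic, and the indices are chosen according to a topological order of this graph, so that $\phi_{ij}\in\Phi_j$ implies $i<j$. Write $\mathbb{N}_m=\{1,2,\dots,m\}$. The relation ascend-or-equal $\preceq^*$ is defined by: $t_i\preceq^* t_j$ iff $i=j$, or there exists $k\in\mathbb{N}_n$ with $\phi_{ik}\in\Phi_k$ and $t_k\preceq^* t_j$ (i.e. $t_i$ equals $t_j$ or is an ancestor of $t_j$). The relation affect-or-equal $\preceq$ is the (smallest) relation satisfying: $t_i\preceq t_j$ iff $t_i\preceq^* t_j$, or [$i<j$ and there exists $k\in\mathbb{N}_{j-1}\setminus\{i\}$ such that ($t_i\preceq t_k$ or $t_k\preceq t_i$) and $t_k\preceq t_j$]. *)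

(* Tables t_1..t_n are represented by ordinals i : 'I_n
   (t_{i+1} <-> i); the topological indexing becomes the hypothesis that
   every foreign-key edge goes from a smaller to a larger index. *)
From mathcomp Require Import all_boot.
Set Implicit Arguments. Unset Strict Implicit. Unset Printing Implicit Defensive.

(* fk i j : there is a foreign key constraint phi_ij in Phi_j,
   i.e. t_i is a parent of t_j (t_j references t_i). *)

Inductive asc_eq (n : nat) (fk : rel 'I_n) : 'I_n -> 'I_n -> Prop :=
  | asc_refl (i : 'I_n) : asc_eq fk i i
  | asc_step (i k j : 'I_n) : fk i k -> asc_eq fk k j -> asc_eq fk i j.

Inductive aff_eq (n : nat) (fk : rel 'I_n) : 'I_n -> 'I_n -> Prop :=
  | aff_asc (i j : 'I_n) : asc_eq fk i j -> aff_eq fk i j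
  | aff_via (i j k : 'I_n) : i < j -> k < j -> k != i ->
      (aff_eq fk i k \/ aff_eq fk k i) -> aff_eq fk k j -> aff_eq fk i j.

From mathcomp Require Import all_boot.

Set Implicit Arguments.
Unset Strict Implicit.

(* With a topological indexing both relations can only go up in the index,
   which gives antisymmetry. For transitivity, the only nontrivial case is
   i < j < k, which is exactly the recursive clause of affect-or-equal with
   the intermediate table j. *)

Section AffectOrEqual.

Variables (n : nat) (fk : rel 'I_n).
Hypothesis topo : forall i j : 'I_n, fk i j -> i < j.

Lemma asc_eq_leq (i j : 'I_n) : asc_eq fk i j -> i <= j.
Proof. by elim=> // x y z /topo/ltnW le_xy _; apply: leq_trans. Qed.

Lemma aff_eq_leq (i j : 'I_n) : aff_eq fk i j -> i <= j.
Proof. by case=> [x y /asc_eq_leq | x y z /ltnW]. Qed.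

Lemma aff_eq_ltn (i j : 'I_n) : aff_eq fk i j -> i != j -> i < j.
Proof. by move=> /aff_eq_leq; rewrite ltn_neqAle => -> ->. Qed.

Lemma aff_eq_refl (i : 'I_n) : aff_eq fk i i.
Proof. exact/aff_asc/asc_refl. Qed.

Lemma aff_eq_anti (i j : 'I_n) : aff_eq fk i j -> aff_eq fk j i -> i = j.
Proof.
move=> /aff_eq_leq le_ij /aff_eq_leq le_ji.
by apply/val_inj/eqP; rewrite eqn_leq le_ij.
Qed.

Lemma aff_eq_trans (i j k : 'I_n) :
  aff_eq fk i j -> aff_eq fk j k -> aff_eq fk i k.
Proof.
have [-> // | ne_ij aff_ij] := eqVneq i j.
have [<- // | ne_jk aff_jk] := eqVneq j k.
have lt_jk : j < k := aff_eq_ltn aff_jk ne_jk.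
have lt_ik : i < k := ltn_trans (aff_eq_ltn aff_ij ne_ij) lt_jk.
by apply: (aff_via lt_ik lt_jk); rewrite 1?eq_sym //; left.
Qed.

End AffectOrEqual.

Theorem lemma3p3 (n : nat) (fk : rel 'I_n)
    (topo : forall i j : 'I_n, fk i j -> i < j) :
  (forall i : 'I_n, aff_eq fk i i) /\
  (forall i j : 'I_n, aff_eq fk i j -> aff_eq fk j i -> i = j) /\
  (forall i j k : 'I_n, aff_eq fk i j -> aff_eq fk j k -> aff_eq fk i k).
Proof.
split; first exact: aff_eq_refl.
split; first exact: aff_eq_anti topo.
exact: aff_eq_trans topo.
Qed.
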